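(* Let $n\ge1$, $1\le k\le n$, $\ell\ge1$, $r:=n(n+1)/2$, $\Sigma\in\mathbb{S}^n$, and let $\tilde\varphi$ be the single-layer objective described in the context. Let $D>0$ and $$\mathcal{D}:=\{(A,b,C,d)\in\mathbb{R}^{\ell\times r}\times\mathbb{R}^\ell\times\mathbb{R}^{nk\times\ell}\times\mathbb{R}^{nk}: \|(A,b,C,d)\|\le D\}.$$ Then the function $\Theta=(A,b,C,d)\mapsto \frac{\partial\tilde\varphi(\Theta)}{\partial b}\in\mathbb{R}^\ell$ is Lipschitz continuous on $\mathcal{D}$ with a constant $L_b$ for which $$L_b^2=\mathcal{C}_b\, n^2D^2\max\{\ell D^2L_Z^2,\ \ell^2D^6L_Z^2,\ \ell^3D^4,\ n\ell\},$$ where $L_Z:=\sqrt{1+\|\Sigma\|_S^2}$ and $\mathcal{C}_b$ is a constant that only depends polynomially on $\sigma'_{\max},\sigma''_{\max},\mu''_{\max}$.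
   Context: $\mathbb{S}^n$ denotes the real symmetric $n\times n$ matrices. $h:\mathbb{S}^n\to\mathbb{R}^{n(n+1)/2}$, $h(\Sigma)=(\Sigma_{1,1},\dots,\Sigma_{1,n},\Sigma_{2,2},\dots,\Sigma_{2,n},\dots,\Sigma_{n,n})^T$, and $\|\Sigma\|_S:=\|h(\Sigma)\|$ (Euclidean norm). $g:\mathbb{R}^{nk}\to\mathbb{R}^{n\times k}$ maps $v$ to $W$ with $W_{i,j}=v_{(i-1)k+j}$. The activation $\sigma:\mathbb{R}\to[-1,1]$ is twice differentiable with $|\sigma'|\le\sigma'_{\max}$ ($\sigma'_{\max}>0$) and $|\sigma''|\le\sigma''_{\max}$; $\tilde\sigma(u):=(\sigma(u_1),\dots,\sigma(u_\ell))^T$. $\mu:\mathbb{R}\to\mathbb{R}$ is smooth with $|\mu'|\le1$, $|\mu''|\le\mu''_{\max}$. For $\Theta=(A,b,C,d)$ with $A\in\mathbb{R}^{\ell\times r}$, $b\in\mathbb{R}^\ell$, $C\in\mathbb{R}^{nk\times\ell}$, $d\in\mathbb{R}^{nk}$, the single-layer network is $\mathcal{N}^\Theta(x):=C\tilde\sigma(Ax+b)+d$, and with $M_\Theta:=g(\mathcal{N}^\Theta(h(\Sigma)))$, $\tilde\varphi(\Theta):=\sum_{i,j=1}^n\mu\big([M_\Theta M_\Theta^T-\Sigma]_{i,j}\big)$. The norm of a list of matrices is $\|(X^1,\dots,X^\gamma)\|:=(\sum_i\|X^i\|_F^2)^{1/2}$, and Lipschitz continuity is with respect to this norm on parameters and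 the Euclidean norm on $\mathbb{R}^\ell$. *)

From HB Require Import structures.
From mathcomp Require Import all_boot all_order all_algebra.
From mathcomp Require Import all_classical all_reals all_analysis.
Set Implicit Arguments. Unset Strict Implicit. Unset Printing Implicit Defensive.
Import Order.TTheory GRing.Theory Num.Theory.
Import numFieldNormedType.Exports.
Local Open Scope ring_scope.

Section Defs.
Variable R : realType.

Definition fro2 (m p : nat) (X : 'M[R]_(m, p)) : R :=
  \sum_(i < m) \sum_(j < p) X i j ^+ 2.

(* entry (i,j) of a matrix accessed with nat indices (0 outside the range) *)
Definition getmx (m p : nat) (X : 'M[R]_(m, p)) (i j : nat) : R :=
  match @insub nat (fun a => a < m)%N 'I_m i, @insub nat (fun a => a < p)%N 'I_p j with
  | Some a, Some b => X a b
  | _, _ => 0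
  end.

(* the (0-based) index pairs (i,j), i <= j, in the order of h:
   (0,0),(0,1),...,(0,n-1),(1,1),...,(n-1,n-1) *)
Definition hidx (n : nat) : seq (nat * nat) :=
  flatten [seq [seq (i, j) | j <- iota i (n - i)] | i <- iota 0 n].

Definition hvec (n : nat) (S : 'M[R]_n) : 'cV[R]_((n * n.+1)./2) :=
  \col_(p < (n * n.+1)./2)
    getmx S (nth (0, 0)%N (hidx n) p).1 (nth (0, 0)%N (hidx n) p).2.

Definition normS (n : nat) (S : 'M[R]_n) : R := Num.sqrt (fro2 (hvec S)).

Definition gmat (n k : nat) (v : 'cV[R]_(n * k)) : 'M[R]_(n, k) :=
  \matrix_(i < n, j < k) getmx v (i * k + j)%N 0%N.

Definition net (r l m : nat) (sigma : R -> R) (A : 'M[R]_(l, r)) (b : 'cV[R]_l)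
  (C : 'M[R]_(m, l)) (d : 'cV[R]_m) (x : 'cV[R]_r) : 'cV[R]_m :=
  C *m map_mx sigma (A *m x + b) + d.

Definition phit (n k l : nat) (S : 'M[R]_n) (sigma mu : R -> R)
  (A : 'M[R]_(l, (n * n.+1)./2)) (b : 'cV[R]_l)
  (C : 'M[R]_(n * k, l)) (d : 'cV[R]_(n * k)) : R :=
  let M := @gmat n k (net sigma A b C d (hvec S)) in
  \sum_(i < n) \sum_(j < n) mu ((M *m M^T - S) i j).

Definition gradb (n k l : nat) (S : 'M[R]_n) (sigma mu : R -> R)
  (A : 'M[R]_(l, (n * n.+1)./2)) (b : 'cV[R]_l)
  (C : 'M[R]_(n * k, l)) (d : 'cV[R]_(n * k)) : 'cV[R]_l :=
  \col_(i < l) derive1 (fun t : R => @phit n k l S sigma mu A (b + t *: delta_mx i 0) C d) 0.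

Definition pnorm (r l m : nat) (A : 'M[R]_(l, r)) (b : 'cV[R]_l)
  (C : 'M[R]_(m, l)) (d : 'cV[R]_m) : R :=
  Num.sqrt (fro2 A + fro2 b + fro2 C + fro2 d).

Definition vnorm (l : nat) (v : 'cV[R]_l) : R := Num.sqrt (fro2 v).

Definition eval3 (P : {poly {poly {poly R}}}) (x y z : R) : R :=
  ((P.[(x%:P)%:P]).[y%:P]).[z].

Definition smooth (f : R -> R) : Prop :=
  forall (m : nat) (x : R), derivable (iter m (@derive1 R R) f) x 1.

End Defs.

(* With u = A h(Sigma) + b, M = g(C sigma(u) + d) and F = mu'(M M^T - Sigma) taken
   entrywise, the chain rule gives the closed form
     d phi~ / d b = sigma'(u) .* C^T vec((F + F^T) M),
   where vec inverts g.  On the ball of radius D every factor is bounded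
   (|sigma| <= 1, |mu'| <= 1) and Lipschitz in Theta (sigma', sigma'' and mu'' are
   bounded), and the product rule
     |X1 Y1 - X2 Y2|^2 <= 2 |X1 - X2|^2 |Y1|^2 + 2 |X2|^2 |Y1 - Y2|^2
   propagates squared Lipschitz bounds along u, sigma(u), M, M M^T - Sigma, F,
   (F + F^T) M and the gradient.  With c = 1 + s1^2 + s2^2 + m2^2 each resulting
   term is at most c^3 n^2 D^2 times an entry of the maximum, so C_b = 2^16 c^3. *)

From HB Require Import structures.
From mathcomp Require Import all_boot all_order all_algebra.
From mathcomp Require Import all_classical all_reals all_analysis.
From mathcomp Require Import ring lra zify.
Import Order.TTheory GRing.Theory Num.Theory.
Import numFieldNormedType.Exports.
Local Open Scope ring_scope.
Set Implicit Arguments. Unset Strict Implicit. Unset Printing Implicit Defensive.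

Section FrobeniusNorm.
Variable R : realType.
Implicit Types m p q : nat.

Lemma fro2_ge0 m p (X : 'M[R]_(m, p)) : 0 <= fro2 X.
Proof. by apply: sumr_ge0 => i _; apply: sumr_ge0 => j _; exact: sqr_ge0. Qed.

Lemma sqr_sum_mul_le (I : finType) (a b : I -> R) :
  (\sum_i a i * b i) ^+ 2 <= (\sum_i a i ^+ 2) * (\sum_i b i ^+ 2).
Proof.
have sum_mul (f g : I -> R) : (\sum_i f i) * (\sum_j g j) = \sum_i \sum_j f i * g j.
  by rewrite mulr_suml; apply: eq_bigr => i _; rewrite mulr_sumr.
have lagrange : \sum_i \sum_j (a i * b j - a j * b i) ^+ 2 =
    (\sum_i a i ^+ 2) * (\sum_i b i ^+ 2) + (\sum_i b i ^+ 2) * (\sum_i a i ^+ 2)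
    - 2 * (\sum_i a i * b i) ^+ 2.
  rewrite expr2 !sum_mul mulr_sumr -!big_split -sumrB; apply: eq_bigr => i _ /=.
  rewrite mulr_sumr -!big_split -sumrB; apply: eq_bigr => j _ /=; ring.
have : 0 <= \sum_i \sum_j (a i * b j - a j * b i) ^+ 2.
  by apply: sumr_ge0 => i _; apply: sumr_ge0 => j _; exact: sqr_ge0.
rewrite lagrange; lra.
Qed.

Lemma fro2_le_entrywise m p (X Y : 'M[R]_(m, p)) (a : R) :
  (forall i j, X i j ^+ 2 <= a * Y i j ^+ 2) -> fro2 X <= a * fro2 Y.
Proof.
move=> le_XY; rewrite /fro2 mulr_sumr; apply: ler_sum => i _.
by rewrite mulr_sumr; apply: ler_sum => j _.
Qed.

Lemma fro2_tr m p (X : 'M[R]_(m, p)) : fro2 X^T = fro2 X.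
Proof. by rewrite /fro2 exchange_big; apply: eq_bigr => i _; apply: eq_bigr => j _; rewrite mxE. Qed.

Lemma fro2D_le m p (X Y : 'M[R]_(m, p)) : fro2 (X + Y) <= 2 * fro2 X + 2 * fro2 Y.
Proof.
rewrite /fro2 !mulr_sumr -big_split; apply: ler_sum => i _ /=.
rewrite !mulr_sumr -big_split; apply: ler_sum => j _ /=; rewrite mxE.
have := sqr_ge0 (X i j - Y i j); nra.
Qed.

Lemma fro2_mulmx_le m p q (X : 'M[R]_(m, p)) (Y : 'M[R]_(p, q)) :
  fro2 (X *m Y) <= fro2 X * fro2 Y.
Proof.
rewrite /fro2 mulr_suml; apply: ler_sum => i _.
rewrite [X in _ <= _ * X]exchange_big mulr_sumr; apply: ler_sum => j _.
rewrite mxE; exact: sqr_sum_mul_le.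
Qed.

Lemma fro2_mulmxB_le m p q (X1 X2 : 'M[R]_(m, p)) (Y1 Y2 : 'M[R]_(p, q)) :
  fro2 (X1 *m Y1 - X2 *m Y2) <=
  2 * (fro2 (X1 - X2) * fro2 Y1) + 2 * (fro2 X2 * fro2 (Y1 - Y2)).
Proof.
have -> : X1 *m Y1 - X2 *m Y2 = (X1 - X2) *m Y1 + X2 *m (Y1 - Y2).
  by rewrite mulmxBl mulmxBr addrA subrK.
apply: le_trans (fro2D_le _ _) _.
by apply: lerD; rewrite ler_pM2l // fro2_mulmx_le.
Qed.

Lemma fro2_le_const m p (X : 'M[R]_(m, p)) (c : R) :
  (forall i j, `|X i j| <= c) -> fro2 X <= c ^+ 2 * m%:R * p%:R.
Proof.
move=> le_Xc.
have -> : c ^+ 2 * m%:R * p%:R = \sum_(i < m) \sum_(j < p) c ^+ 2.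
  rewrite !sumr_const !card_ord -mulrnA -[RHS]mulr_natr natrM.
  by rewrite [p%:R * _]mulrC mulrA.
apply: ler_sum => i _; apply: ler_sum => j _.
rewrite -[_ ^+ 2]real_normK ?num_real // lerXn2r ?nnegrE //.
exact: le_trans (le_Xc i j).
Qed.

Lemma fro2_map_mxB_le m p (f : R -> R) (c : R) (X Y : 'M[R]_(m, p)) :
  (forall a b, `|f a - f b| <= c * `|a - b|) ->
  fro2 (map_mx f X - map_mx f Y) <= c ^+ 2 * fro2 (X - Y).
Proof.
move=> lip_f; apply: fro2_le_entrywise => i j; rewrite !mxE.
have := lip_f (X i j) (Y i j).
rewrite -[_ ^+ 2]real_normK ?num_real // -[(X i j - Y i j) ^+ 2]real_normK ?num_real //.
move=> le_f; rewrite -exprMn lerXn2r ?nnegrE //.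
exact: le_trans le_f.
Qed.

Lemma fro2_hadamardB_le l (a1 a2 y1 y2 : 'cV[R]_l) (c : R) :
  (forall i, `|a2 i 0| <= c) ->
  fro2 (\col_i (a1 i 0 * y1 i 0) - \col_i (a2 i 0 * y2 i 0)) <=
  2 * (fro2 (a1 - a2) * fro2 y1) + 2 * (c ^+ 2 * fro2 (y1 - y2)).
Proof.
move=> le_a2c.
have -> : \col_i (a1 i 0 * y1 i 0) - \col_i (a2 i 0 * y2 i 0) =
    \col_i ((a1 - a2) i 0 * y1 i 0) + \col_i (a2 i 0 * (y1 - y2) i 0).
  by apply/matrixP => i j; rewrite !mxE; ring.
apply: le_trans (fro2D_le _ _) _; apply: lerD; rewrite ler_pM2l //.
- rewrite /fro2 mulr_suml; apply: ler_sum => i _; rewrite !big_ord1 mxE exprMn.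
  rewrite ler_wpM2l ?sqr_ge0 // (bigD1 i) //= big_ord1 lerDl.
  by apply: sumr_ge0 => j _; rewrite big_ord1 sqr_ge0.
- apply: fro2_le_entrywise => i j; rewrite mxE ord1 exprMn ler_wpM2r ?sqr_ge0 //.
  rewrite -[_ ^+ 2]real_normK ?num_real // lerXn2r ?nnegrE //.
  exact: le_trans (le_a2c i).
Qed.

End FrobeniusNorm.

Section Vectorisation.
Variable R : realType.

Lemma getmx_ord m p (X : 'M[R]_(m, p)) (a : 'I_m) (b : 'I_p) : getmx X a b = X a b.
Proof.
rewrite /getmx; case: insubP => [a' _ ea|]; last by rewrite ltn_ord.
case: insubP => [b' _ eb|]; last by rewrite ltn_ord.
by congr (X _ _); apply: val_inj.
Qed.

Lemma getmxB m p (X Y : 'M[R]_(m, p)) a b :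
  getmx (X - Y) a b = getmx X a b - getmx Y a b.
Proof.
rewrite /getmx; case: insubP => [a' _ _|_]; last by rewrite subr0.
by case: insubP => [b' _ _|_]; rewrite ?subr0 // !mxE.
Qed.

Lemma sum_ord_mulnDl n k (F : nat -> R) :
  \sum_(a < n * k) F a = \sum_(p < n) \sum_(j < k) F (p * k + j)%N.
Proof.
rewrite -(big_mkord xpredT F); elim: n => [|n IH]; first by rewrite mul0n big_geq ?big_ord0.
rewrite big_ord_recr /= -IH mulSnr (@big_cat_nat _ _ _ (n * k)) ?leq_addr //=.
congr (_ + _); rewrite -{1}[(n * k)%N]add0n big_addn addKn big_mkord.
by apply: eq_bigr => j _; rewrite addnC.
Qed.

Variables n k : nat.

Fact flat_ord_subproof (p : 'I_n) (j : 'I_k) : (p * k + j < n * k)%N.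
Proof. by have := ltn_ord p; have := ltn_ord j; nia. Qed.

Definition flat_ord (p : 'I_n) (j : 'I_k) : 'I_(n * k) := Ordinal (flat_ord_subproof p j).

Lemma sum_flat_ord (G : 'I_(n * k) -> R) :
  \sum_a G a = \sum_p \sum_j G (flat_ord p j).
Proof.
pose F a := if insub a is Some a' then G a' else 0.
have FE (a : 'I_(n * k)) : F a = G a by rewrite /F valK.
rewrite (eq_bigr (fun a : 'I_(n * k) => F a)) => [|a _]; last by rewrite FE.
rewrite sum_ord_mulnDl; apply: eq_bigr => p _; apply: eq_bigr => j _.
by rewrite -[(p * k + j)%N]/(val (flat_ord p j)) FE.
Qed.

Lemma gmatE (v : 'cV[R]_(n * k)) p j : gmat v p j = v (flat_ord p j) 0.
Proof. by rewrite mxE -[(p * k + j)%N]/(val (flat_ord p j)) -[0%N]/(val (@ord0 0)) getmx_ord. Qed.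

Definition vecmx (W : 'M[R]_(n, k)) : 'cV[R]_(n * k) :=
  \col_a getmx W (a %/ k) (a %% k).

Lemma vecmxE (W : 'M[R]_(n, k)) p j : vecmx W (flat_ord p j) 0 = W p j.
Proof.
have k_gt0 : (0 < k)%N by apply: leq_ltn_trans (ltn_ord j).
by rewrite mxE /= divnMDl // divn_small // addn0 modnMDl modn_small // getmx_ord.
Qed.

Lemma gmatK (W : 'M[R]_(n, k)) : gmat (vecmx W) = W.
Proof. by apply/matrixP => p j; rewrite gmatE vecmxE. Qed.

Lemma gmatB (v1 v2 : 'cV[R]_(n * k)) : gmat (v1 - v2) = gmat v1 - gmat v2.
Proof. by apply/matrixP => p j; rewrite !mxE getmxB. Qed.

Lemma vecmxB (W1 W2 : 'M[R]_(n, k)) : vecmx (W1 - W2) = vecmx W1 - vecmx W2.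
Proof. by apply/matrixP => a b; rewrite !mxE getmxB. Qed.

Lemma fro2_gmat (v : 'cV[R]_(n * k)) : fro2 (gmat v) = fro2 v.
Proof.
rewrite [RHS]/fro2 sum_flat_ord; apply: eq_bigr => p _; apply: eq_bigr => j _.
by rewrite big_ord1 gmatE.
Qed.

Lemma fro2_vecmx (W : 'M[R]_(n, k)) : fro2 (vecmx W) = fro2 W.
Proof. by rewrite -fro2_gmat gmatK. Qed.

End Vectorisation.

Section GradientFormula.
Variable R : realType.
Implicit Types (f : R -> R) (x : R).

Lemma is_derive1_sum m (h : 'I_m -> R -> R) x (dh : 'I_m -> R) :
  (forall i, is_derive x 1 (h i) (dh i)) ->
  is_derive x 1 (fun t => \sum_i h i t) (\sum_i dh i).
Proof. by move=> h_dh; have := is_derive_sum h_dh; rewrite fct_sumE. Qed.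

Lemma derive1_val f x df : is_derive x 1 f df -> derive1 f x = df.
Proof. by move=> f_df; rewrite derive1E derive_val. Qed.

Lemma derive1_is_derive f x : derivable f x 1 -> is_derive x 1 f (derive1 f x).
Proof. by move=> df; rewrite derive1E; apply: derivableP. Qed.

Lemma sum_mul_gram_deriv n k (F : 'M[R]_n) (M dM : 'M[R]_(n, k)) :
  \sum_p \sum_q F p q * (dM *m M^T + M *m dM^T) p q =
  \sum_p \sum_j ((F + F^T) *m M) p j * dM p j.
Proof.
transitivity (\sum_p \sum_q \sum_j F p q * M q j * dM p j +
              \sum_q \sum_p \sum_j F q p * M q j * dM p j).
  rewrite -big_split; apply: eq_bigr => p _ /=; rewrite -big_split; apply: eq_bigr => q _ /=.
  rewrite !mxE mulrDr !mulr_sumr; congr (_ + _); apply: eq_bigr => j _; rewrite !mxE; ring.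
rewrite [in X in _ + X = _]exchange_big -big_split; apply: eq_bigr => p _ /=.
rewrite [in X in X + _ = _]exchange_big [in X in _ + X = _]exchange_big -big_split.
apply: eq_bigr => j _ /=.
rewrite -big_split mxE mulr_suml; apply: eq_bigr => q _ /=; rewrite !mxE; ring.
Qed.

Variables (n k : nat) (S : 'M[R]_n) (mu : R -> R).
Hypothesis mu_derivable : forall x, derivable mu x 1.

Lemma is_derive_sum_mu_gram (M : R -> 'M[R]_(n, k)) (dM : 'M[R]_(n, k)) x :
  (forall p j, is_derive x 1 (fun t => M t p j) (dM p j)) ->
  let F := map_mx (derive1 mu) (M x *m (M x)^T - S) in
  is_derive x 1 (fun t => \sum_p \sum_q mu ((M t *m (M t)^T - S) p q))
    (\sum_p \sum_j ((F + F^T) *m M x) p j * dM p j).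
Proof.
move=> M_dM F; rewrite -sum_mul_gram_deriv.
apply: is_derive1_sum => p; apply: is_derive1_sum => q.
have gramE t : (M t *m (M t)^T - S) p q = \sum_j M t p j * M t q j - S p q.
  by rewrite !mxE; congr (_ - _); apply: eq_bigr => j _; rewrite mxE.
have -> : (fun t => mu ((M t *m (M t)^T - S) p q)) =
          mu \o (fun t => \sum_j M t p j * M t q j - S p q).
  by apply/funext => t /=; congr (mu _); apply: gramE.
rewrite /F [map_mx _ _ p q]mxE gramE; apply: is_derive1_comp; first exact: derive1_is_derive.
apply: is_derive_eq; first by apply: is_deriveD; apply: is_derive1_sum.
rewrite addr0 !mxE -big_split; apply: eq_bigr => j _ /=; rewrite !mxE /GRing.scale /=; ring.
Qed.

End GradientFormula.

Section Network.
Variables (R : realType) (n k l : nat) (S : 'M[R]_n) (sigma mu : R -> R).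
Local Notation r := (n * n.+1)./2.
Local Notation z := (hvec S).

Definition preact (A : 'M[R]_(l, r)) (b : 'cV[R]_l) : 'cV[R]_l := A *m z + b.

Definition hidden A b : 'cV[R]_l := map_mx sigma (preact A b).

Definition outmx A b (C : 'M[R]_(n * k, l)) (d : 'cV[R]_(n * k)) : 'M[R]_(n, k) :=
  gmat (C *m hidden A b + d).

Definition lossder A b C d : 'M[R]_n :=
  map_mx (derive1 mu) (outmx A b C d *m (outmx A b C d)^T - S).

Definition backmx A b C d : 'M[R]_(n, k) :=
  (lossder A b C d + (lossder A b C d)^T) *m outmx A b C d.

Definition gradb_expr A b C d : 'cV[R]_l :=
  \col_i (map_mx (derive1 sigma) (preact A b) i 0 * (C^T *m vecmx (backmx A b C d)) i 0).

Hypothesis sigma_derivable : forall x, derivable sigma x 1.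
Hypothesis mu_derivable : forall x, derivable mu x 1.

Lemma is_derive_outmx_bias A b C d (i : 'I_l) p j :
  is_derive (0 : R) 1 (fun t => outmx A (b + t *: delta_mx i 0) C d p j)
    (C (flat_ord p j) i * derive1 sigma (preact A b i 0)).
Proof.
set a := flat_ord p j.
have -> : (fun t => outmx A (b + t *: delta_mx i 0) C d p j) =
    (fun t => \sum_m C a m * sigma (preact A b m 0 + t * (i == m)%:R) + d a 0).
  apply/funext => t; rewrite /outmx gmatE /hidden !mxE; congr (_ + _).
  by apply: eq_bigr => m _; rewrite !mxE eqxx andbT eq_sym addrA.
have sigma_shift m : is_derive (0 : R) 1 (fun t => sigma (preact A b m 0 + t * (i == m)%:R))
    (derive1 sigma (preact A b m 0) * (i == m)%:R).
  have := @is_derive1_comp R sigma (fun t => preact A b m 0 + t * (i == m)%:R) 0.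
  rewrite /= mul0r addr0; apply; first exact: derive1_is_derive.
  by apply: is_derive_eq; rewrite add0r mul1r scaler0 add0r /GRing.scale /= mulr1.
apply: is_derive_eq; first by apply: is_deriveD; apply: is_derive1_sum.
rewrite addr0 (bigD1 i) //= eqxx mulr1 big1 ?addr0 // => m /negPf i_neq_m.
by rewrite eq_sym i_neq_m mulr0 scaler0.
Qed.

Lemma gradbE A b C d : gradb S sigma mu A b C d = gradb_expr A b C d.
Proof.
apply/matrixP => i i0; rewrite ord1 mxE [RHS]mxE [map_mx _ _ i 0]mxE [(C^T *m _) i 0]mxE.
pose M t := outmx A (b + t *: delta_mx i 0) C d.
have M0 : M 0 = outmx A b C d by rewrite /M scale0r addr0.
pose dM := \matrix_(p, j) (C (flat_ord p j) i * derive1 sigma (preact A b i 0)).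
have M_dM p j : is_derive (0 : R) 1 (fun t => M t p j) (dM p j).
  by rewrite mxE; exact: is_derive_outmx_bias.
have := is_derive_sum_mu_gram S mu_derivable M_dM.
rewrite -/M M0 => /derive1_val ->.
rewrite -/(lossder A b C d) -/(backmx A b C d) sum_flat_ord mulr_sumr.
apply: eq_bigr => p _; rewrite mulr_sumr; apply: eq_bigr => j _.
by rewrite [dM p j]mxE [C^T _ _]mxE vecmxE; ring.
Qed.

End Network.

Section MeanValue.
Local Open Scope classical_set_scope.

Lemma dist_le_derive1_bound (R : realType) (f : R -> R) (c : R) :
  (forall x, derivable f x 1) -> (forall x, `|derive1 f x| <= c) ->
  forall a b, `|f a - f b| <= c * `|a - b|.
Proof.
move=> f_derivable f'_le.
suff le_ab a b : a <= b -> `|f b - f a| <= c * `|b - a|.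
  by move=> a b; case: (leP a b) => [/le_ab|/ltW/le_ab]; rewrite // distrC [`|a - b|]distrC.
move=> le_ab.
have f_cont : {within `[a, b], continuous f}.
  by apply/continuous_subspaceT => x; exact/differentiable_continuous/derivable1_diffP.
have [x _ ->] := MVT_segment le_ab (fun x _ => derive1_is_derive (f_derivable x)) f_cont.
by rewrite normrM ler_wpM2r.
Qed.

End MeanValue.

Lemma pnorm_sqr (R : realType) r l m (A : 'M[R]_(l, r)) b (C : 'M[R]_(m, l)) d :
  pnorm A b C d ^+ 2 = fro2 A + fro2 b + fro2 C + fro2 d.
Proof. by rewrite /pnorm sqr_sqrtr // !addr_ge0 // fro2_ge0. Qed.

Lemma pnorm_le_fro2 (R : realType) r l m (A : 'M[R]_(l, r)) b (C : 'M[R]_(m, l)) d (D : R) :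
  pnorm A b C d <= D ->
  [/\ fro2 A <= D ^+ 2, fro2 b <= D ^+ 2, fro2 C <= D ^+ 2 & fro2 d <= D ^+ 2].
Proof.
move=> le_D; have := sqrtr_ge0 (fro2 A + fro2 b + fro2 C + fro2 d).
rewrite -/(pnorm A b C d) => ge0_p.
have : pnorm A b C d ^+ 2 <= D ^+ 2 by rewrite lerXn2r ?nnegrE // (le_trans ge0_p).
rewrite pnorm_sqr.
have := fro2_ge0 A; have := fro2_ge0 b; have := fro2_ge0 C; have := fro2_ge0 d.
by move=> *; split; lra.
Qed.

Section LipschitzEstimates.
Variables (R : realType) (n k l : nat) (S : 'M[R]_n) (sigma mu : R -> R) (s1 s2 m2 D : R).
Local Notation r := (n * n.+1)./2.
Hypothesis n_gt0 : (0 < n)%N.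
Hypothesis l_gt0 : (0 < l)%N.
Hypothesis sigma_bounded : forall x, -1 <= sigma x <= 1.
Hypothesis sigma_derivable : forall x, derivable sigma x 1.
Hypothesis sigma'_derivable : forall x, derivable (derive1 sigma) x 1.
Hypothesis sigma'_le : forall x, `|derive1 sigma x| <= s1.
Hypothesis sigma''_le : forall x, `|derive1 (derive1 sigma) x| <= s2.
Hypothesis mu'_derivable : forall x, derivable (derive1 mu) x 1.
Hypothesis mu'_le : forall x, `|derive1 mu x| <= 1.
Hypothesis mu''_le : forall x, `|derive1 (derive1 mu) x| <= m2.

Local Notation preact := (@preact R n l S).
Local Notation hidden := (@hidden R n l S sigma).
Local Notation outmx := (@outmx R n k l S sigma).
Local Notation lossder := (@lossder R n k l S sigma mu).
Local Notation backmx := (@backmx R n k l S sigma mu).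
Local Notation gradb_expr := (@gradb_expr R n k l S sigma mu).

Let c := 1 + s1 ^+ 2 + s2 ^+ 2 + m2 ^+ 2.
Let La := 1 + fro2 (hvec S).
Let L : R := l%:R.
Let N : R := n%:R.
Let D2 := D ^+ 2.

Let c_ge1 : 1 <= c.
Proof. by rewrite /c; have := sqr_ge0 s1; have := sqr_ge0 s2; have := sqr_ge0 m2; lra. Qed.

Let s1_le_c : s1 ^+ 2 <= c.
Proof. by rewrite /c; have := sqr_ge0 s2; have := sqr_ge0 m2; lra. Qed.

Let s2_le_c : s2 ^+ 2 <= c.
Proof. by rewrite /c; have := sqr_ge0 s1; have := sqr_ge0 m2; lra. Qed.

Let m2_le_c : m2 ^+ 2 <= c.
Proof. by rewrite /c; have := sqr_ge0 s1; have := sqr_ge0 s2; lra. Qed.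

Let La_ge1 : 1 <= La.
Proof. by rewrite /La lerDl fro2_ge0. Qed.

Let L_ge1 : 1 <= L. Proof. by rewrite ler1n. Qed.
Let N_ge1 : 1 <= N. Proof. by rewrite ler1n. Qed.
Let D2_ge0 : 0 <= D2. Proof. exact: sqr_ge0. Qed.

Let kv := 8 * c * (L + D2 * La).
Let kE := 16 * D2 * L * kv.
Let kW := (2 ^+ 9 * c * D2 ^+ 2 * L ^+ 2 + 8 * N ^+ 2) * kv.
Let ky := 32 * N ^+ 2 * D2 * L + 2 * D2 * kW.
Let kg := 64 * c * La * N ^+ 2 * D2 ^+ 2 * L + 2 * c * ky.

Let Mx := Num.max (Num.max (L * D2 * La) (L ^+ 2 * D2 ^+ 3 * La))
                  (Num.max (L ^+ 3 * D2 ^+ 2) (N * L)).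

Let Y := N ^+ 2 * D2 * Mx.

(* The entries of the maximum in [L_b] are exactly what dominates the monomials of [kg]. *)
Let monomials_le_Y :
  [/\ N ^+ 2 * D2 ^+ 2 * L * La <= Y, N ^+ 2 * D2 * L <= Y, D2 ^+ 3 * L ^+ 3 <= Y,
      D2 ^+ 4 * La * L ^+ 2 <= Y & N ^+ 2 * D2 ^+ 2 * La <= Y].
Proof.
have := La_ge1; have := L_ge1; have := N_ge1; have := D2_ge0.
move=> D2_0 N_1 L_1 La_1.
have Mx1 : L * D2 * La <= Mx by rewrite /Mx !le_max lexx.
have Mx2 : L ^+ 2 * D2 ^+ 3 * La <= Mx by rewrite /Mx !le_max lexx !orbT.
have Mx3 : L ^+ 3 * D2 ^+ 2 <= Mx by rewrite /Mx !le_max lexx !orbT.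
have Mx4 : N * L <= Mx by rewrite /Mx !le_max lexx !orbT.
have N2_ge1 : 1 <= N ^+ 2 by rewrite expr_ge1 // (le_trans ler01).
have ND_ge0 : 0 <= N ^+ 2 * D2 by rewrite mulr_ge0 // (le_trans ler01).
have DMx_le : D2 * Mx <= Y.
  by rewrite /Y -mulrA ler_peMl // mulr_ge0 // (le_trans _ Mx4) // mulr_ge0 // (le_trans ler01).
split.
- by rewrite /Y (_ : _ * La = N ^+ 2 * D2 * (L * D2 * La)) ?ler_wpM2l //; ring.
- by rewrite /Y ler_wpM2l // (le_trans _ Mx4) // ler_peMl // (le_trans ler01).
- by rewrite (le_trans _ DMx_le) // (_ : _ * _ = D2 * (L ^+ 3 * D2 ^+ 2)) ?ler_wpM2l //; ring.
- by rewrite (le_trans _ DMx_le) // (_ : _ * _ = D2 * (L ^+ 2 * D2 ^+ 3 * La)) ?ler_wpM2l //; ring.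
- rewrite /Y (_ : _ * La = N ^+ 2 * D2 * (D2 * La)); last by ring.
  rewrite ler_wpM2l // (le_trans _ Mx1) // -mulrA.
  have DLa_ge0 : 0 <= D2 * La by rewrite mulr_ge0 // (le_trans ler01 La_1).
  by rewrite ler_peMl.
Qed.

Let kg_le : kg <= 2 ^+ 16 * c ^+ 3 * Y.
Proof.
have [Ym1 Ym2 Ym3 Ym4 Ym5] := monomials_le_Y.
have := c_ge1; have := L_ge1; have := D2_ge0 => D2_0 L_1 c_1.
have -> : kg = 64 * c * (N ^+ 2 * D2 ^+ 2 * L * La) + 64 * c * (N ^+ 2 * D2 * L) +
    32 * c ^+ 2 * (512 * c * (D2 ^+ 3 * L ^+ 3 + D2 ^+ 4 * La * L ^+ 2) +
                   8 * (N ^+ 2 * D2 * L + N ^+ 2 * D2 ^+ 2 * La)).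
  by rewrite /kg /ky /kW /kv; ring.
have c_0 : 0 <= c by apply: le_trans c_1.
have Y_0 : 0 <= Y.
  by apply: le_trans Ym2; rewrite mulr_ge0 ?(le_trans ler01 L_1) // mulr_ge0 ?sqr_ge0.
have c2_0 : 0 <= c ^+ 2 by rewrite exprn_ge0.
have e1 : c * (N ^+ 2 * D2 ^+ 2 * L * La) <= c * Y by rewrite ler_wpM2l.
have e2 : c * (N ^+ 2 * D2 * L) <= c * Y by rewrite ler_wpM2l.
have e3 : c ^+ 3 * (D2 ^+ 3 * L ^+ 3 + D2 ^+ 4 * La * L ^+ 2) <= c ^+ 3 * (Y + Y).
  by rewrite ler_wpM2l ?exprn_ge0 ?lerD.
have e4 : c ^+ 2 * (N ^+ 2 * D2 * L + N ^+ 2 * D2 ^+ 2 * La) <= c ^+ 2 * (Y + Y).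
  by rewrite ler_wpM2l ?lerD.
have c_le_c2 : c <= c ^+ 2 by rewrite expr2 ler_peMl.
have c2_le_c3 : c ^+ 2 <= c ^+ 3 by rewrite exprS ler_peMl.
have cY : c * Y <= c ^+ 3 * Y by rewrite ler_wpM2r // (le_trans c_le_c2).
have c2Y : c ^+ 2 * Y <= c ^+ 3 * Y by rewrite ler_wpM2r.
have c3Y_0 : 0 <= c ^+ 3 * Y by rewrite mulr_ge0 ?exprn_ge0.
lra.
Qed.

Section SizeBounds.
Variables (A : 'M[R]_(l, r)) (b : 'cV[R]_l) (C : 'M[R]_(n * k, l)) (d : 'cV[R]_(n * k)).
Hypothesis in_ball : pnorm A b C d <= D.

Lemma fro2_hidden_le : fro2 (hidden A b) <= L.
Proof.
apply: le_trans (fro2_le_const (c := 1) _) _; last by rewrite expr1n mul1r mulr1.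
by move=> i j; rewrite mxE ler_norml; exact: sigma_bounded.
Qed.

Lemma fro2_outmx_le : fro2 (outmx A b C d) <= 4 * D2 * L.
Proof.
have [_ _ C_le d_le] := pnorm_le_fro2 in_ball.
rewrite /outmx fro2_gmat; apply: le_trans (fro2D_le _ _) _.
have Ch_le : fro2 (C *m hidden A b) <= D2 * L.
  by apply: le_trans (fro2_mulmx_le _ _) _; apply: ler_pM; rewrite ?fro2_ge0 ?fro2_hidden_le.
by rewrite -/D2 in d_le; have := L_ge1; have := D2_ge0; nra.
Qed.

Lemma fro2_lossder_le : fro2 (lossder A b C d) <= N ^+ 2.
Proof.
apply: le_trans (fro2_le_const (c := 1) _) _; last by rewrite expr1n mul1r expr2.
by move=> i j; rewrite mxE; exact: mu'_le.
Qed.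

Lemma fro2_lossder_sym_le : fro2 (lossder A b C d + (lossder A b C d)^T) <= 4 * N ^+ 2.
Proof. by apply: le_trans (fro2D_le _ _) _; rewrite fro2_tr; have := fro2_lossder_le; lra. Qed.

Lemma fro2_backmx_le : fro2 (backmx A b C d) <= 16 * N ^+ 2 * D2 * L.
Proof.
apply: le_trans (fro2_mulmx_le _ _) _.
have -> : 16 * N ^+ 2 * D2 * L = (4 * N ^+ 2) * (4 * D2 * L) by ring.
by apply: ler_pM; rewrite ?fro2_ge0 ?fro2_lossder_sym_le ?fro2_outmx_le.
Qed.

Lemma fro2_backvec_le : fro2 (C^T *m vecmx (backmx A b C d)) <= 16 * N ^+ 2 * D2 ^+ 2 * L.
Proof.
have [_ _ C_le _] := pnorm_le_fro2 in_ball.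
apply: le_trans (fro2_mulmx_le _ _) _; rewrite fro2_tr fro2_vecmx.
have -> : 16 * N ^+ 2 * D2 ^+ 2 * L = D2 * (16 * N ^+ 2 * D2 * L) by ring.
by apply: ler_pM; rewrite ?fro2_ge0 ?fro2_backmx_le.
Qed.

End SizeBounds.

Section Differences.
Variables (A1 A2 : 'M[R]_(l, r)) (b1 b2 : 'cV[R]_l).
Variables (C1 C2 : 'M[R]_(n * k, l)) (d1 d2 : 'cV[R]_(n * k)).
Hypotheses (in_ball1 : pnorm A1 b1 C1 d1 <= D) (in_ball2 : pnorm A2 b2 C2 d2 <= D).

Let T := pnorm (A1 - A2) (b1 - b2) (C1 - C2) (d1 - d2) ^+ 2.

Let fro2B_le_T :
  [/\ fro2 (A1 - A2) <= T, fro2 (b1 - b2) <= T, fro2 (C1 - C2) <= T & fro2 (d1 - d2) <= T].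
Proof.
rewrite /T pnorm_sqr.
have := fro2_ge0 (A1 - A2); have := fro2_ge0 (b1 - b2).
have := fro2_ge0 (C1 - C2); have := fro2_ge0 (d1 - d2).
by move=> *; split; lra.
Qed.

Let T_ge0 : 0 <= T. Proof. exact: sqr_ge0. Qed.

Lemma fro2_preactB_le : fro2 (preact A1 b1 - preact A2 b2) <= 2 * La * T.
Proof.
have [dA_le db_le _ _] := fro2B_le_T.
have -> : preact A1 b1 - preact A2 b2 = (A1 - A2) *m hvec S + (b1 - b2).
  by rewrite /preact mulmxBl opprD addrACA.
apply: le_trans (fro2D_le _ _) _.
have := fro2_mulmx_le (A1 - A2) (hvec S); have := fro2_ge0 (hvec S).
by rewrite /La; nra.
Qed.

Lemma fro2_map_preactB_le (f : R -> R) (s : R) : (forall x, derivable f x 1) ->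
  (forall x, `|derive1 f x| <= s) -> s ^+ 2 <= c ->
  fro2 (map_mx f (preact A1 b1) - map_mx f (preact A2 b2)) <= c * (2 * La * T).
Proof.
move=> f_derivable f'_le s_le_c.
apply: le_trans (fro2_map_mxB_le _ _ (dist_le_derive1_bound f_derivable f'_le)) _.
by apply: ler_pM; rewrite ?sqr_ge0 ?fro2_ge0 ?fro2_preactB_le.
Qed.

Lemma fro2_outmxB_le : fro2 (outmx A1 b1 C1 d1 - outmx A2 b2 C2 d2) <= kv * T.
Proof.
have [_ _ dC_le dd_le] := fro2B_le_T.
have [_ _ C2_le _] := pnorm_le_fro2 in_ball2.
rewrite /outmx -gmatB fro2_gmat opprD addrACA.
apply: le_trans (fro2D_le _ _) _.
have CsB_le := fro2_mulmxB_le C1 C2 (hidden A1 b1) (hidden A2 b2).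
have e1 : fro2 (C1 - C2) * fro2 (hidden A1 b1) <= T * L.
  by apply: ler_pM; rewrite ?fro2_ge0 ?dC_le ?fro2_hidden_le.
have e2 : fro2 C2 * fro2 (hidden A1 b1 - hidden A2 b2) <= D2 * (c * (2 * La * T)).
  apply: ler_pM; rewrite ?fro2_ge0 //.
  exact: fro2_map_preactB_le sigma_derivable sigma'_le s1_le_c.
have T_le : T <= T * L by rewrite ler_peMr ?L_ge1.
have TL_le : T * L <= c * (T * L).
  by rewrite ler_peMl ?c_ge1 // mulr_ge0 // (le_trans ler01 L_ge1).
have -> : kv * T = 8 * (c * (T * L)) + 4 * (D2 * (c * (2 * La * T))) by rewrite /kv; ring.
by have := T_ge0; lra.
Qed.

Lemma fro2_lossderB_le :
  fro2 (lossder A1 b1 C1 d1 - lossder A2 b2 C2 d2) <= c * kE * T.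
Proof.
set M1 := outmx A1 b1 C1 d1; set M2 := outmx A2 b2 C2 d2.
have dM_le : fro2 (M1 - M2) <= kv * T := fro2_outmxB_le.
have gram_le : fro2 ((M1 *m M1^T - S) - (M2 *m M2^T - S)) <= kE * T.
  rewrite opprB addrA subrK; apply: le_trans (fro2_mulmxB_le _ _ _ _) _.
  rewrite -linearB /= !fro2_tr.
  have e1 : fro2 (M1 - M2) * fro2 M1 <= kv * T * (4 * D2 * L).
    by apply: ler_pM; rewrite ?fro2_ge0 // fro2_outmx_le.
  have e2 : fro2 M2 * fro2 (M1 - M2) <= 4 * D2 * L * (kv * T).
    by apply: ler_pM; rewrite ?fro2_ge0 // fro2_outmx_le.
  have -> : kE * T = 2 * (kv * T * (4 * D2 * L)) + 2 * (4 * D2 * L * (kv * T)).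
    by rewrite /kE; ring.
  lra.
apply: le_trans (fro2_map_mxB_le _ _ (dist_le_derive1_bound mu'_derivable mu''_le)) _.
rewrite -mulrA; apply: ler_pM; rewrite ?sqr_ge0 ?fro2_ge0 //; exact: m2_le_c.
Qed.

Lemma fro2_backmxB_le : fro2 (backmx A1 b1 C1 d1 - backmx A2 b2 C2 d2) <= kW * T.
Proof.
set F1 := lossder A1 b1 C1 d1; set F2 := lossder A2 b2 C2 d2.
set M1 := outmx A1 b1 C1 d1; set M2 := outmx A2 b2 C2 d2.
have dM_le : fro2 (M1 - M2) <= kv * T := fro2_outmxB_le.
have dP_le : fro2 ((F1 + F1^T) - (F2 + F2^T)) <= 4 * (c * kE * T).
  rewrite opprD addrACA -linearB /=; apply: le_trans (fro2D_le _ _) _.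
  by rewrite fro2_tr; have := fro2_lossderB_le; lra.
apply: le_trans (fro2_mulmxB_le _ _ _ _) _.
have e1 : fro2 ((F1 + F1^T) - (F2 + F2^T)) * fro2 M1 <= 4 * (c * kE * T) * (4 * D2 * L).
  by apply: ler_pM; rewrite ?fro2_ge0 // fro2_outmx_le.
have e2 : fro2 (F2 + F2^T) * fro2 (M1 - M2) <= 4 * N ^+ 2 * (kv * T).
  by apply: ler_pM; rewrite ?fro2_ge0 // fro2_lossder_sym_le.
have -> : kW * T = 2 * (4 * (c * kE * T) * (4 * D2 * L)) + 2 * (4 * N ^+ 2 * (kv * T)).
  by rewrite /kW /kE; ring.
lra.
Qed.

Lemma fro2_backvecB_le :
  fro2 (C1^T *m vecmx (backmx A1 b1 C1 d1) - C2^T *m vecmx (backmx A2 b2 C2 d2)) <= ky * T.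
Proof.
have [_ _ dC_le _] := fro2B_le_T.
have [_ _ C2_le _] := pnorm_le_fro2 in_ball2.
apply: le_trans (fro2_mulmxB_le _ _ _ _) _.
rewrite -linearB -vecmxB /= !fro2_tr !fro2_vecmx.
have e1 : fro2 (C1 - C2) * fro2 (backmx A1 b1 C1 d1) <= T * (16 * N ^+ 2 * D2 * L).
  by apply: ler_pM; rewrite ?fro2_ge0 // fro2_backmx_le.
have e2 : fro2 C2 * fro2 (backmx A1 b1 C1 d1 - backmx A2 b2 C2 d2) <= D2 * (kW * T).
  by apply: ler_pM; rewrite ?fro2_ge0 // fro2_backmxB_le.
have -> : ky * T = 2 * (T * (16 * N ^+ 2 * D2 * L)) + 2 * (D2 * (kW * T)).
  by rewrite /ky; ring.
lra.
Qed.

Let fro2_gradb_exprB_le_kg :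
  fro2 (gradb_expr A1 b1 C1 d1 - gradb_expr A2 b2 C2 d2) <= kg * T.
Proof.
have sigma'_le2 i : `|map_mx (derive1 sigma) (preact A2 b2) i 0| <= s1.
  by rewrite mxE; exact: sigma'_le.
rewrite /gradb_expr; apply: le_trans (fro2_hadamardB_le _ _ _ sigma'_le2) _.
have e1 : fro2 (map_mx (derive1 sigma) (preact A1 b1) - map_mx (derive1 sigma) (preact A2 b2)) *
    fro2 (C1^T *m vecmx (backmx A1 b1 C1 d1)) <= c * (2 * La * T) * (16 * N ^+ 2 * D2 ^+ 2 * L).
  apply: ler_pM; rewrite ?fro2_ge0 ?fro2_backvec_le //.
  exact: fro2_map_preactB_le sigma'_derivable sigma''_le s2_le_c.
have e2 : s1 ^+ 2 * fro2 (C1^T *m vecmx (backmx A1 b1 C1 d1) - C2^T *m vecmx (backmx A2 b2 C2 d2))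
    <= c * (ky * T).
  by apply: ler_pM; rewrite ?sqr_ge0 ?fro2_ge0 ?fro2_backvecB_le.
have -> : kg * T = 2 * (c * (2 * La * T) * (16 * N ^+ 2 * D2 ^+ 2 * L)) + 2 * (c * (ky * T)).
  by rewrite /kg; ring.
lra.
Qed.

Lemma fro2_gradb_exprB_le :
  fro2 (gradb_expr A1 b1 C1 d1 - gradb_expr A2 b2 C2 d2) <= 2 ^+ 16 * c ^+ 3 * Y * T.
Proof. exact: le_trans fro2_gradb_exprB_le_kg (ler_wpM2r T_ge0 kg_le). Qed.

End Differences.

End LipschitzEstimates.

Definition lipschitz_poly (R : realType) : {poly {poly {poly R}}} :=
  (2 ^+ 16)%:P%:P%:P * (1 + 'X ^+ 2 + ('X : {poly {poly R}})%:P ^+ 2 +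
                         (('X : {poly R})%:P)%:P ^+ 2) ^+ 3.

Lemma eval3_lipschitz_poly (R : realType) (x y z : R) :
  eval3 (lipschitz_poly R) x y z = 2 ^+ 16 * (1 + x ^+ 2 + y ^+ 2 + z ^+ 2) ^+ 3.
Proof. by rewrite /eval3 /lipschitz_poly !(hornerE, horner_exp). Qed.

Theorem lemma4 (R : realType) :
  exists P : {poly {poly {poly R}}},
  forall (n k l : nat) (S : 'M[R]_n) (sigma mu : R -> R)
         (s1max s2max m2max D : R),
    (1 <= n)%N -> (1 <= k)%N -> (k <= n)%N -> (1 <= l)%N ->
    S^T = S ->
    (forall x, -1 <= sigma x <= 1) ->
    (forall x, derivable sigma x 1) ->
    (forall x, derivable (derive1 sigma) x 1) ->
    0 < s1max ->
    (forall x, `|derive1 sigma x| <= s1max) ->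
    (forall x, `|derive1 (derive1 sigma) x| <= s2max) ->
    smooth mu ->
    (forall x, `|derive1 mu x| <= 1) ->
    (forall x, `|derive1 (derive1 mu) x| <= m2max) ->
    0 < D ->
    let Cb := eval3 P s1max s2max m2max in
    let LZ := Num.sqrt (1 + normS S ^+ 2) in
    let Lb := Num.sqrt (Cb * (n%:R ^+ 2) * D ^+ 2 *
                Num.max (Num.max (l%:R * D ^+ 2 * LZ ^+ 2)
                                 (l%:R ^+ 2 * D ^+ 6 * LZ ^+ 2))
                        (Num.max (l%:R ^+ 3 * D ^+ 4) (n%:R * l%:R))) in
    0 <= Cb /\
    forall (A1 A2 : 'M[R]_(l, (n * n.+1)./2)) (b1 b2 : 'cV[R]_l)
           (C1 C2 : 'M[R]_(n * k, l)) (d1 d2 : 'cV[R]_(n * k)),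
      pnorm A1 b1 C1 d1 <= D -> pnorm A2 b2 C2 d2 <= D ->
      vnorm (@gradb R n k l S sigma mu A1 b1 C1 d1 - @gradb R n k l S sigma mu A2 b2 C2 d2)
        <= Lb * pnorm (A1 - A2) (b1 - b2) (C1 - C2) (d1 - d2).
Proof.
exists (lipschitz_poly R).
move=> n k l S sigma mu s1 s2 m2 D n_gt0 _ _ l_gt0 _ sigma_bounded sigma_derivable
  sigma'_derivable _ sigma'_le sigma''_le mu_smooth mu'_le mu''_le _ Cb LZ Lb.
have Cb_ge0 : 0 <= Cb.
  by rewrite /Cb eval3_lipschitz_poly mulr_ge0 ?exprn_ge0 // !addr_ge0 ?sqr_ge0.
split=> // A1 A2 b1 b2 C1 C2 d1 d2 in_ball1 in_ball2.
have LZ2 : LZ ^+ 2 = 1 + fro2 (hvec S).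
  by rewrite sqr_sqrtr ?addr_ge0 ?sqr_ge0 // sqr_sqrtr ?fro2_ge0.
have mu_derivable : forall x, derivable mu x 1 := mu_smooth 0%N.
rewrite !gradbE //.
have := fro2_gradb_exprB_le S n_gt0 l_gt0 sigma_bounded sigma_derivable sigma'_derivable
  sigma'_le sigma''_le (mu_smooth 1%N) mu'_le mu''_le in_ball1 in_ball2.
rewrite -[(D ^+ 2) ^+ 3]exprM -[(D ^+ 2) ^+ 2]exprM => lip.
rewrite /vnorm /Lb /Cb eval3_lipschitz_poly LZ2.
set p := pnorm (A1 - A2) _ _ _ in lip *.
have p_E : p = Num.sqrt (p ^+ 2) by rewrite sqrtr_sqr ger0_norm // sqrtr_ge0.
have Mx_ge0 : 0 <= Num.max (Num.max (l%:R * D ^+ 2 * (1 + fro2 (hvec S)))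
                                    (l%:R ^+ 2 * D ^+ 6 * (1 + fro2 (hvec S))))
                           (Num.max (l%:R ^+ 3 * D ^+ 4) (n%:R * l%:R)).
  by rewrite !le_max (_ : 0 <= n%:R * l%:R) ?orbT // mulr_ge0.
have c_ge0 : 0 <= 1 + s1 ^+ 2 + s2 ^+ 2 + m2 ^+ 2 by rewrite !addr_ge0 ?sqr_ge0.
have K_ge0 : 0 <= 2 ^+ 16 * (1 + s1 ^+ 2 + s2 ^+ 2 + m2 ^+ 2) ^+ 3 * n%:R ^+ 2 * D ^+ 2.
  by rewrite mulr_ge0 ?sqr_ge0 // mulr_ge0 ?sqr_ge0 // mulr_ge0 ?exprn_ge0 ?ler0n.
rewrite [X in _ <= _ * X]p_E -sqrtrM ?ler_sqrt.
- apply: (le_trans lip); rewrite le_eqVlt; apply/orP; left; apply/eqP; ring.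
- by rewrite mulr_ge0 ?sqr_ge0 // mulr_ge0.
- exact: mulr_ge0.
Qed.
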